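(* Let $\mathcal{M}_1,\mathcal{M}_2$ be matroids on a finite ground set $E$, let $T$ be independent in both, let $p\in(0,1)$, and let $\Psi(e)$, $e\in T$, be i.i.d. with $\Pr[\Psi(e)=1]=1-p$; define $S=\{e\in T:\Psi(e)=1\}$. Let $i\in\{1,2\}$ and $\bar\imath$ the other index. Let $\tilde E\subseteq\mathrm{span}_i(T)$ and let $\tilde I\subseteq\tilde E$ be independent in $\mathcal{M}_i$ and in $\mathcal{M}_{\bar\imath}/T$. Then for any fixed arrival order of the elements of $\tilde E$, $$\mathbb{E}_\Psi\left[\left|\mathrm{Greedy}(\mathcal{M}_i/S,\ \mathcal{M}_{\bar\imath}/T,\ \tilde E)\right|\right]\ge\frac{1}{1+p}\,p\,|\tilde I|.$$
   Context: $\mathrm{span}_i(T)=\{e\in E:\mathrm{rank}_{\mathcal{M}_i}(T\cup\{e\})=\mathrm{rank}_{\mathcal{M}_i}(T)\}$. For a matroid $\mathcal{M}$ and an independent set $X$, the contraction $\mathcal{M}/X$ has independent sets exactly those $A$ with $A\cap X=\emptyset$ and $A\cup X$ independent in $\mathcal{M}$. $\mathrm{Greedy}(\mathcal{N}_1,\mathcal{N}_2,\tilde E)$ processes the elements of $\tilde E$ in the given order, starting from the empty set, and adds an element whenever the current set together with it is independent in both $\mathcal{N}_1$ and $\mathcal{N}_2$; it returns the resulting set. *)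

From HB Require Import structures.
From mathcomp Require Import all_boot all_order all_algebra.
Set Implicit Arguments. Unset Strict Implicit. Unset Printing Implicit Defensive.
Import Order.TTheory GRing.Theory Num.Theory.

Record matroid (E : finType) := Matroid {
  indep :> {set E} -> bool;
  indep0 : indep set0;
  indep_sub : forall A B : {set E}, A \subset B -> indep B -> indep A;
  indep_exch : forall A B : {set E}, indep A -> indep B -> #|A| < #|B| ->
    exists2 x, x \in B :\: A & indep (x |: A)
}.

Section MatroidDefs.
Variable E : finType.
Implicit Types (M : matroid E) (X A : {set E}).

Definition mrank M X : nat :=
  \max_(A : {set E} | (A \subset X) && M A) #|A|.

Definition mspan M X : {set E} :=
  [set e | mrank M (e |: X) == mrank M X].

(* independent sets of the contraction M / X (X independent in M) *)
Definition contract M X : pred {set E} :=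
  fun A => [disjoint A & X] && M (A :|: X).

Definition greedy (N1 N2 : pred {set E}) (s : seq E) : {set E} :=
  foldl (fun G e => if N1 (e |: G) && N2 (e |: G) then e |: G else G) set0 s.

(* E_Psi[f(S)] where S = {e in T : Psi e = 1}, Psi(e) i.i.d. with
   Pr[Psi e = 1] = 1 - p : each S subset of T has probability
   (1-p)^|S| p^|T\S|. *)
Definition expect_sub (R : numDomainType) (p : R) (T : {set E})
    (f : {set E} -> R) : R :=
  \sum_(S in powerset T) ((1 - p) ^+ #|S| * p ^+ #|T :\: S|) * f S.

End MatroidDefs.

(* For S in the support of the random set, let G(S) be the greedy output and
   Y(S) the elements of It that greedy rejected although they still fit in
   Mb / T; they are spanned by G(S) + S in Mi.  Exchange in Mb / T gives
   |It| <= |G| + |Y|.  Extending Y to a maximal Mi-independent B inside Y + S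
   and letting Q = S \ B, exchange in Mi gives |Y| <= |G| + |Q|.  Pairing S
   with S + t, p E|Q| = (1 - p) E|Z| where Z(S) = {t in T \ S | t in Q(S + t)};
   an element t free over G(S) + S does not change the greedy run when added
   to S, hence cannot lie in Q(S + t), so Z(S) + S is spanned by G(S) + S and
   |Z| <= |G|.  Altogether p |It| <= 2p E|G| + (1 - p) E|G| = (1 + p) E|G|. *)

From HB Require Import structures.
From mathcomp Require Import all_boot all_order all_algebra.
From mathcomp Require Import zify ring lra.
Import Order.TTheory GRing.Theory Num.Theory.
Set Implicit Arguments. Unset Strict Implicit. Unset Printing Implicit Defensive.

Lemma cardsU_disjoint (T : finType) (A B : {set T}) :
  [disjoint A & B] -> #|A :|: B| = #|A| + #|B|.
Proof. by move=> dAB; apply/eqP; rewrite (leq_card_setU A B).2. Qed.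

Lemma disjointsU1 (T : finType) (x : T) (A B : {set T}) :
  [disjoint x |: A & B] = (x \notin B) && [disjoint A & B].
Proof. by rewrite -disjointU1; apply: eq_disjoint => y; rewrite !inE. Qed.

Section MatroidClosure.
Variables (E : finType) (M : matroid E).
Implicit Types (A B X U : {set E}) (x t : E).

(* Closure of [A]; only meaningful for [A] independent. *)
Definition mcl A := [set x | (x \in A) || ~~ M (x |: A)].

Lemma mem_mcl A x : x \in A -> x \in mcl A.
Proof. by rewrite inE => ->. Qed.

Lemma card_le_mcl X A : M X -> M A -> X \subset mcl A -> #|X| <= #|A|.
Proof.
move=> MX MA /subsetP XA; rewrite leqNgt; apply/negP => ltAX.
have [x /setDP [xX xA] MxA] := indep_exch MA MX ltAX.
by move: (XA x xX); rewrite inE (negbTE xA) MxA.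
Qed.

Definition max_indep X U :=
  [arg max_(B > X | [&& X \subset B, B \subset U & M B]) #|B|].

Lemma max_indepP X U : M X -> X \subset U ->
  [/\ X \subset max_indep X U, max_indep X U \subset U, M (max_indep X U)
    & U \subset mcl (max_indep X U)].
Proof.
move=> MX XU; rewrite /max_indep; case: arg_maxnP; first by rewrite subxx XU MX.
move=> B /and3P [XB BU MB] Bmax; split=> //; apply/subsetP => u uU.
rewrite inE; case: (boolP (u \in B)) => //= uB; apply/negP => MuB.
have := Bmax (u |: B); rewrite MuB (subset_trans XB (subsetUr _ _)).
by rewrite subUset sub1set uU BU cardsU1 uB /= => /(_ isT); rewrite add1n ltnn.
Qed.

Lemma indep_setU1_mcl X A t :
  M X -> M (t |: A) -> t \notin A -> X \subset mcl A -> M (t |: X).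
Proof.
move=> MX MtA tA XA; have [XB BU MB _] := max_indepP MX (subsetUl X A).
set B := max_indep X (X :|: A) in XB BU MB.
have /card_le_mcl leBA : B \subset mcl A.
  apply: subset_trans BU _; rewrite subUset XA; apply/subsetP => x; exact: mem_mcl.
have ltB : #|B| < #|t |: A| by rewrite cardsU1 tA ltnS leBA // (indep_sub (subsetUr _ _) MtA).
have [x /setDP [] ] := indep_exch MB MtA ltB.
rewrite in_setU1 => /orP [/eqP -> _ MtB|xA xB MxB]; first exact: indep_sub (setUS _ XB) MtB.
have [_ _ _ /subsetP /(_ x)] := max_indepP MX (subsetUl X A).
by rewrite -/B in_setU xA orbT inE (negbTE xB) MxB => /(_ isT).
Qed.

End MatroidClosure.

Section Contraction.
Variable E : finType.
Implicit Types (M : matroid E) (A B X : {set E}) (N : pred {set E}).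

Definition down_closed N := forall A B, A \subset B -> N B -> N A.

Lemma contract_down_closed M X : down_closed (contract M X).
Proof.
move=> A B AB /andP [dBX MBX]; rewrite /contract (disjointWl AB dBX).
exact: indep_sub (setSU _ AB) MBX.
Qed.

End Contraction.

Arguments contract_down_closed {E} M X [A B].

Section Greedy.
Variables (E : finType) (N1 N2 : pred {set E}).
Implicit Types (H : {set E}) (s : seq E).

Definition gstep H e := if N1 (e |: H) && N2 (e |: H) then e |: H else H.

Lemma sub_foldl_gstep H s : H \subset foldl gstep H s.
Proof.
elim: s H => [|e s IHs] H /=; first exact: subxx.
by apply: subset_trans (IHs _); rewrite /gstep; case: ifP => // _; exact: subsetUr.
Qed.

Lemma foldl_gstep_indep H s :
  N1 H && N2 H -> N1 (foldl gstep H s) && N2 (foldl gstep H s).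
Proof. by elim: s H => [|e s IHs] H //= NH; apply: IHs; rewrite /gstep; case: ifP. Qed.

Lemma foldl_gstep_maximal H s e : down_closed N1 -> down_closed N2 ->
  e \in s -> e \notin foldl gstep H s ->
  ~~ (N1 (e |: foldl gstep H s) && N2 (e |: foldl gstep H s)).
Proof.
move=> dc1 dc2; elim: s H => [|a s IHs] H //=; rewrite in_cons.
case/orP => [/eqP <-|es]; last exact: IHs.
rewrite /gstep; case: ifP => [_|NeH eG]; first by rewrite (subsetP (sub_foldl_gstep _ _)) ?setU11.
apply: contraFN NeH => /andP [N1e N2e].
by have eHG := setUS [set e] (sub_foldl_gstep H s); rewrite (dc1 _ _ eHG N1e) (dc2 _ _ eHG N2e).
Qed.

Lemma greedy_indep s : N1 set0 -> N2 set0 ->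
  N1 (greedy N1 N2 s) && N2 (greedy N1 N2 s).
Proof. by move=> N10 N20; apply: foldl_gstep_indep; rewrite N10. Qed.

Lemma greedy_maximal s e : down_closed N1 -> down_closed N2 ->
  e \in s -> e \notin greedy N1 N2 s ->
  ~~ (N1 (e |: greedy N1 N2 s) && N2 (e |: greedy N1 N2 s)).
Proof. exact: foldl_gstep_maximal. Qed.

End Greedy.

Lemma eq_foldl_gstep (E : finType) (N1 N1' N2 : pred {set E}) H s :
  (forall X : {set E}, N1' X -> N1 X) ->
  (forall X : {set E}, X \subset foldl (gstep N1 N2) H s -> N1 X -> N1' X) ->
  foldl (gstep N1' N2) H s = foldl (gstep N1 N2) H s.
Proof.
elim: s H => [|e s IHs] H //= N1'1 N11'; rewrite -IHs //; congr foldl.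
rewrite /gstep; case N1e: (N1 (e |: H)); last first.
  by case: ifP => // /andP [/N1'1]; rewrite N1e.
case N2e: (N2 (e |: H)); rewrite ?andbF // N11' //.
by have := sub_foldl_gstep N1 N2 (gstep N1 N2 H e) s; rewrite /gstep N1e N2e.
Qed.

Lemma eq_greedy (E : finType) (N1 N1' N2 : pred {set E}) s :
  (forall X : {set E}, N1' X -> N1 X) ->
  (forall X : {set E}, X \subset greedy N1 N2 s -> N1 X -> N1' X) ->
  greedy N1' N2 s = greedy N1 N2 s.
Proof. exact: eq_foldl_gstep. Qed.

Section Expectation.
Variables (E : finType) (R : numDomainType) (p : R).
Implicit Types (T S : {set E}) (f g : {set E} -> R).
Local Open Scope ring_scope.

Definition toggle (t : E) S := if t \in S then S :\ t else t |: S.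

Lemma toggleK t : involutive (toggle t).
Proof.
move=> S; case tS: (t \in S); first by rewrite /toggle tS setD11 setD1K.
by rewrite /toggle tS setU11 setU1K ?tS.
Qed.

Lemma big_powersetD1 (V : nmodType) T t (F : {set E} -> V) : t \in T ->
  \sum_(S in powerset T) F S = \sum_(S in powerset (T :\ t)) (F S + F (t |: S)).
Proof.
move=> tT; rewrite (bigID (fun S => t \in S)) big_split /= addrC; congr (_ + _).
  by apply: eq_bigl => S; rewrite !powersetE subsetD1.
rewrite (reindex_inj (can_inj (toggleK t))) /=; apply: eq_big => S; rewrite /toggle.
  rewrite !powersetE; case: ifP => tS; first by rewrite setD11 andbF subsetD1 tS andbF.
  by rewrite setU11 andbT subsetD1 tS andbT subUset sub1set tT.
by case: ifP => // _; rewrite setD11 andbF.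
Qed.

(* Conditioning on [Psi t]: [t] lies in [S] with probability [1 - p]. *)
Lemma expect_subD1 T t f : t \in T ->
  expect_sub p T f = expect_sub p (T :\ t) (fun S => p * f S + (1 - p) * f (t |: S)).
Proof.
move=> tT; rewrite /expect_sub (big_powersetD1 _ tT); apply: eq_bigr => S.
rewrite powersetE subsetD1 => /andP [ST tS].
have DtS : T :\: (t |: S) = (T :\ t) :\: S.
  by apply/setP => x; rewrite !inE negb_or andbCA andbA.
have cardTS : #|T :\: S| = #|(T :\ t) :\: S|.+1.
  rewrite (cardsD1 t) !inE tS tT add1n; congr _.+1; apply: eq_card => x.
  by rewrite !inE andbCA.
rewrite DtS cardTS cardsU1 tS add1n !exprS; ring.
Qed.

Lemma eq_expect_sub T f g : (forall S, S \subset T -> f S = g S) ->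
  expect_sub p T f = expect_sub p T g.
Proof. by move=> fg; apply: eq_bigr => S; rewrite powersetE => /fg ->. Qed.

Lemma expect_subZ T c f : c * expect_sub p T f = expect_sub p T (fun S => c * f S).
Proof. by rewrite mulr_sumr; apply: eq_bigr => S _; ring. Qed.

Lemma expect_subD T f g :
  expect_sub p T (fun S => f S + g S) = expect_sub p T f + expect_sub p T g.
Proof. by rewrite -big_split; apply: eq_bigr => S _; rewrite mulrDr. Qed.

Lemma expect_sub_sum T (I : finType) (P : pred I) (F : I -> {set E} -> R) :
  expect_sub p T (fun S => \sum_(i in P) F i S) = \sum_(i in P) expect_sub p T (F i).
Proof. by rewrite exchange_big; apply: eq_bigr => S _; rewrite mulr_sumr. Qed.

Lemma expect_sub_cst T c : expect_sub p T (fun=> c) = c.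
Proof.
move: {2}#|T| (erefl #|T|) => n; elim: n T => [|n IHn] T cardT.
  move/eqP: cardT; rewrite cards_eq0 => /eqP ->.
  by rewrite /expect_sub powerset0 big_set1 cards0 setD0 cards0 !expr0 !mul1r.
have [t tT] : exists t, t \in T by apply/set0Pn; rewrite -card_gt0 cardT.
rewrite (expect_subD1 _ tT) -[RHS](IHn (T :\ t)); last by rewrite (cardsD1 t) tT in cardT; lia.
by apply: eq_expect_sub => S _; ring.
Qed.

Lemma ler_expect_sub T f g : 0 <= p <= 1 -> (forall S, S \subset T -> f S <= g S) ->
  expect_sub p T f <= expect_sub p T g.
Proof.
move=> /andP [p_ge0 p_le1] fg; apply: ler_sum => S; rewrite powersetE => ST.
by apply: ler_wpM2l; [rewrite mulr_ge0 ?exprn_ge0 ?subr_ge0 | exact: fg].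
Qed.

Lemma card_sum_indicator T (A : {set E}) : A \subset T ->
  #|A|%:R = \sum_(t in T) (t \in A)%:R :> R.
Proof.
move=> AT; rewrite -sum1_card natr_sum [RHS](big_setID A) /= (setIidPr AT).
rewrite [X in _ + X]big1 ?addr0 => [|t]; last by rewrite inE => /andP [/negbTE ->].
by apply: eq_bigr => t ->.
Qed.

Lemma expect_card_transport T (Q : {set E} -> {set E}) :
  (forall S, S \subset T -> Q S \subset S) ->
  p * expect_sub p T (fun S => #|Q S|%:R) =
  (1 - p) * expect_sub p T (fun S => #|[set t in T :\: S | t \in Q (t |: S)]|%:R).
Proof.
move=> QS; rewrite (@eq_expect_sub _ _ (fun S => \sum_(t in T) (t \in Q S)%:R)); last first.
  by move=> S ST; apply: card_sum_indicator; exact: subset_trans (QS _ ST) ST.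
rewrite (@eq_expect_sub _ (fun S => #|_|%:R)
  (fun S => \sum_(t in T) (t \in [set t in T :\: S | t \in Q (t |: S)])%:R)); last first.
  by move=> S _; apply: card_sum_indicator; apply/subsetP => x; rewrite !inE => /andP [/andP []].
rewrite !expect_sub_sum !mulr_sumr; apply: eq_bigr => t tT.
rewrite !(expect_subD1 _ tT) !expect_subZ; apply: eq_expect_sub => S.
rewrite subsetD1 => /andP [ST tS].
have -> : (t \in Q S) = false by apply: contraNF tS; apply: subsetP; exact: QS.
by rewrite !inE eqxx tT tS /=; ring.
Qed.

End Expectation.

Section GreedyBound.
Variables (E : finType) (Mi Mb : matroid E) (T It : {set E}) (order : seq E).
Hypotheses (MiT : Mi T) (MbT : Mb T) (MiIt : Mi It) (MbIt : contract Mb T It)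
  (It_order : {subset It <= order}).
Implicit Types (S : {set E}) (x : E).

Definition grd S := greedy (contract Mi S) (contract Mb T) order.

Definition blocked S := [set y in It | (y \notin grd S) && contract Mb T (y |: grd S)].

Definition blocked_basis S := max_indep Mi (blocked S) (blocked S :|: S).

Definition discarded S := S :\: blocked_basis S.

Definition newly_discarded S := [set t in T :\: S | t \in discarded (t |: S)].

Lemma grd_indep S : S \subset T ->
  [/\ [disjoint grd S & S], Mi (grd S :|: S), [disjoint grd S & T] & Mb (grd S :|: T)].
Proof.
move=> ST; have : contract Mi S (grd S) && contract Mb T (grd S).
  by apply: greedy_indep; rewrite /contract !set0U ?MbT ?(indep_sub ST MiT) andbT;
    rewrite -setI_eq0 set0I.
by case/andP => /andP [? ?] /andP [? ?].
Qed.

Lemma blocked_sub S : blocked S \subset It.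
Proof. by apply/subsetP => y; rewrite inE => /andP []. Qed.

Lemma blocked_disjoint S : [disjoint blocked S & T].
Proof. by case/andP: MbIt => dIt _; apply: disjointWl dIt; exact: blocked_sub. Qed.

Lemma blocked_mcl S : S \subset T -> blocked S \subset mcl Mi (grd S :|: S).
Proof.
move=> ST; have [dGS _ _ _] := grd_indep ST; apply/subsetP => y yY.
have yT := disjointFr (blocked_disjoint S) yY; move: yY; rewrite !inE => /and3P [yIt yG MbyG].
have := greedy_maximal (contract_down_closed Mi S) (contract_down_closed Mb T)
  (It_order yIt) yG.
rewrite -/(grd S) MbyG andbT /contract -setUA disjointsU1 dGS andbT.
by rewrite (contraFF (subsetP ST y) yT) /= => ->; rewrite orbT.
Qed.

Lemma card_It_le S : S \subset T -> #|It| <= #|grd S| + #|blocked S|.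
Proof.
move=> ST; have [_ _ dGT MbGT] := grd_indep ST; case/andP: MbIt => dIt MbItT.
have dItY : [disjoint It :\: blocked S & T] by apply: disjointWl dIt; exact: subsetDl.
rewrite -(cardsID (blocked S) It) (setIidPr (blocked_sub S)) addnC leq_add2r.
rewrite -(leq_add2r #|T|) -!cardsU_disjoint //.
apply: card_le_mcl (indep_sub (setSU _ (subsetDl _ _)) MbItT) MbGT _.
apply/subsetP => x; rewrite !inE => /orP [/andP [xY xIt]|->]; last by rewrite !orbT.
move: xY; rewrite xIt /= negb_and negbK => /orP [->//|].
rewrite /contract disjointsU1 (disjointFr dIt xIt) dGT -setUA /= => ->.
by rewrite orbT.
Qed.

Lemma card_blocked_le S : S \subset T -> #|blocked S| <= #|grd S| + #|discarded S|.
Proof.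
move=> ST; have [dGS MiGS _ _] := grd_indep ST.
have MiY : Mi (blocked S) by apply: indep_sub (blocked_sub S) MiIt.
have [YB BU MiB _] := max_indepP MiY (subsetUl (blocked S) S).
rewrite -/(blocked_basis S) in YB BU MiB; set B := blocked_basis S in YB BU MiB *.
have le_B : #|B| <= #|grd S| + #|S|.
  rewrite -cardsU_disjoint //; apply: card_le_mcl MiB MiGS (subset_trans BU _).
  rewrite subUset blocked_mcl //; apply/subsetP => x xS; apply: mem_mcl.
  by rewrite inE xS orbT.
have dYS : [disjoint blocked S & S :&: B].
  by apply: disjointWr (blocked_disjoint S); apply: subset_trans (subsetIl _ _) ST.
have le_YSB : #|blocked S| + #|S :&: B| <= #|B|.
  by rewrite -cardsU_disjoint //; apply: subset_leq_card; rewrite subUset YB subsetIr.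
by have := cardsID B S; rewrite /discarded -/B; lia.
Qed.

Lemma grd_setU1 S x : S \subset T -> x \in T -> x \notin S ->
  Mi (x |: (grd S :|: S)) -> grd (x |: S) = grd S.
Proof.
move=> ST xT xS MixGS; have [_ _ dGT _] := grd_indep ST.
apply: eq_greedy => [X /andP [dX MiX] | X XG /andP [dX _]]; rewrite /contract.
  move: dX; rewrite disjoint_sym disjointsU1 disjoint_sym => /andP [_ ->] /=.
  exact: indep_sub (setUS _ (subsetUr _ _)) MiX.
rewrite disjoint_sym disjointsU1 disjoint_sym dX.
rewrite (contraFN (subsetP XG x)) ?(disjointFl dGT xT) //=.
by apply: indep_sub MixGS; rewrite setUCA; apply: setUS; exact: setSU.
Qed.

Lemma card_newly_discarded_le S : S \subset T -> #|newly_discarded S| <= #|grd S|.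
Proof.
move=> ST; have [dGS MiGS dGT _] := grd_indep ST.
have ZT : newly_discarded S \subset T :\: S.
  by apply/subsetP => t; rewrite inE => /andP [].
have S_mcl : S \subset mcl Mi (grd S :|: S).
  by apply/subsetP => x xS; apply: mem_mcl; rewrite inE xS orbT.
have dZS : [disjoint newly_discarded S & S].
  by apply: disjointWl ZT _; rewrite disjoints_subset setDE subsetIr.
rewrite -(leq_add2r #|S|) -!cardsU_disjoint //.
apply: card_le_mcl (indep_sub _ MiT) MiGS _.
  by rewrite subUset ST andbT; exact: subset_trans ZT (subsetDl _ _).
rewrite subUset S_mcl andbT; apply/subsetP => x xZ.
have /setDP [xT xS] := subsetP ZT x xZ.
have xGS : x \notin grd S :|: S by rewrite in_setU (negbTE xS) (disjointFl dGT xT).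
rewrite inE (negbTE xGS) /=; apply/negP => MixGS.
have eY : blocked (x |: S) = blocked S by rewrite /blocked (grd_setU1 ST xT xS MixGS).
have MiY : Mi (blocked (x |: S)) by apply: indep_sub (blocked_sub _) MiIt.
have [_ BU MiB Bmcl] := max_indepP MiY (subsetUl _ (x |: S)).
rewrite -/(blocked_basis (x |: S)) in BU MiB Bmcl.
have xB : x \notin blocked_basis (x |: S).
  by move: xZ; rewrite !inE => /andP [_ /andP []].
have := subsetP Bmcl x; rewrite !inE eqxx orbT (negbTE xB) /= => /(_ isT) /negP; apply.
apply: indep_setU1_mcl MiB MixGS xGS _; apply/subsetP => b bB.
move: (subsetP BU b bB); rewrite eY in_setU in_setU1.
case/or3P => [/(subsetP (blocked_mcl ST)) //|/eqP bx|/(subsetP S_mcl) //].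
by move: bB; rewrite bx (negbTE xB).
Qed.

Local Open Scope ring_scope.

Lemma expect_card_grd_ge (R : realFieldType) (p : R) : 0 <= p <= 1 ->
  p * #|It|%:R <= (1 + p) * expect_sub p T (fun S => #|grd S|%:R).
Proof.
move=> p01; have /andP [p_ge0 p_le1] := p01.
set Eg := expect_sub p T (fun S => #|grd S|%:R).
set Ey := expect_sub p T (fun S => #|blocked S|%:R).
set Eq := expect_sub p T (fun S => #|discarded S|%:R).
set Ez := expect_sub p T (fun S => #|newly_discarded S|%:R).
have le_It : #|It|%:R <= Eg + Ey.
  rewrite -expect_subD -[X in X <= _](expect_sub_cst p T).
  by apply: ler_expect_sub => // S ST; rewrite -natrD ler_nat card_It_le.
have le_Ey : Ey <= Eg + Eq.
  rewrite -expect_subD; apply: ler_expect_sub => // S ST.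
  by rewrite -natrD ler_nat card_blocked_le.
have le_Ez : Ez <= Eg.
  by apply: ler_expect_sub => // S ST; rewrite ler_nat card_newly_discarded_le.
have transport : p * Eq = (1 - p) * Ez.
  by apply: expect_card_transport => S _; exact: subsetDl.
have q_ge0 : 0 <= 1 - p by rewrite subr_ge0.
have := ler_wpM2l p_ge0 le_It; have := ler_wpM2l p_ge0 le_Ey.
have := ler_wpM2l q_ge0 le_Ez; lra.
Qed.

End GreedyBound.

Local Open Scope ring_scope.

Theorem lemma8 (R : realFieldType) (E : finType) (Mi Mb : matroid E)
    (T : {set E}) (p : R) (Et It : {set E}) (order : seq E) :
  Mi T -> Mb T -> 0 < p < 1 ->
  Et \subset mspan Mi T ->
  It \subset Et -> Mi It -> contract Mb T It ->
  uniq order -> (forall e, (e \in order) = (e \in Et)) ->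
  expect_sub p T (fun S => (#|greedy (contract Mi S) (contract Mb T) order|)%:R)
    >= 1 / (1 + p) * p * (#|It|)%:R.
Proof.
move=> MiT MbT /andP [p_gt0 p_lt1] _ ItEt MiIt MbIt _ order_Et.
have It_order : {subset It <= order} by move=> e /(subsetP ItEt); rewrite order_Et.
have p01 : 0 <= p <= 1 by rewrite !ltW.
have := expect_card_grd_ge MiT MbT MiIt MbIt It_order p01.
by rewrite mul1r -mulrA ler_pdivrMl //; lra.
Qed.
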